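(* Let $f:[0,1]\to[0,1]$ be a continuous map with a unique fixed point $a$, and let $P$ be a (non-fixed) periodic orbit of $f$ with over-rotation pair $(p,q)$ and code $L:P\to\mathbb{R}$. If there exist $x,y\in P$ with $x>_a y$ but $L(x)>L(y)$, then there are integers $l\ge 0$ and $k\ge 1$ with $k<q$ and $\frac{l}{k}<\frac{p}{q}$ such that the over-rotation interval of $f$ satisfies $I_f\supset[\frac{l}{k},\frac12]$.
   Context: For a continuous interval map $f$ and a periodic orbit $P$ of period $q$ which is not a fixed point, let $2p$ be the number of points $x\in P$ such that $f(x)-x$ and $f^2(x)-f(x)$ have different signs; the over-rotation pair of $P$ is $orp(P)=(p,q)$ and its over-rotation number is $\rho(P)=p/q$. The over-rotation interval $I_f$ of $f$ is the closure of the set of over-rotation numbers of all non-fixed periodic orbits of $f$; it is an interval of the form $[r_f,\frac12]$. For $a$ the fixed point, write $x>_a y$ if $x<y<a$ or $x>y>a$ (i.e. $x,y$ lie on the same side of $a$ and $x$ is farther from $a$), and $x\ge_a y$ if $x\le y<a$ or $x\ge y>a$. Code: let $\rho=\rho(P)$ and let $\varphi:P\to\{0,1\}$ be $\varphi(y)=1$ if $y>a$ and $f(y)<a$, and $\varphi(y)=0$ otherwise. The code of $P$ is the function $L:P\to\mathbb{R}$ with $L(x_0)=0$ for the leftmost point $x_0$ of $P$ and $L(f(y))=L(y)+\rho-\varphi(y)$ for $y\in P$ (this is well defined since $\sum_{y\in P}\varphi(y)=p=q\rho$). *)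

From Stdlib Require Import Reals Lra Lia.
Open Scope R_scope.

Fixpoint iter (f : R -> R) (n : nat) (x : R) : R :=
  match n with O => x | S m => f (iter f m x) end.

Definition maps_unit (f : R -> R) : Prop :=
  forall x, 0 <= x <= 1 -> 0 <= f x <= 1.

Definition continuous_on_unit (f : R -> R) : Prop :=
  forall x, 0 <= x <= 1 -> forall eps, eps > 0 ->
    exists delta, delta > 0 /\
      forall y, 0 <= y <= 1 -> Rabs (y - x) < delta -> Rabs (f y - f x) < eps.

Definition periodic_pt (f : R -> R) (x : R) (q : nat) : Prop :=
  (1 <= q)%nat /\ iter f q x = x /\ (forall i, (0 < i < q)%nat -> iter f i x <> x).

Definition in_orbit (f : R -> R) (x : R) (q : nat) (y : R) : Prop :=
  exists i, (i < q)%nat /\ y = iter f i x.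

Definition sign_change (f : R -> R) (y : R) : nat :=
  if Rlt_dec ((f y - y) * (f (f y) - f y)) 0 then 1%nat else 0%nat.

(* number of points of the orbit P of x (period q) with a sign change;
   this equals 2p where (p,q) is the over-rotation pair of P *)
Fixpoint num_sc_aux (f : R -> R) (x : R) (n : nat) : nat :=
  match n with
  | O => O
  | S m => (num_sc_aux f x m + sign_change f (iter f m x))%nat
  end.
Definition num_sc (f : R -> R) (x : R) (q : nat) : nat := num_sc_aux f x q.

Definition orn (f : R -> R) (x : R) (q : nat) : R :=
  INR (num_sc f x q) / (2 * INR q).

(* r lies in the over-rotation interval I_f: the closure of the set of
   over-rotation numbers of all non-fixed periodic orbits of f on [0,1] *)
Definition in_orint (f : R -> R) (r : R) : Prop :=
  forall eps, eps > 0 ->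
    exists x q, 0 <= x <= 1 /\ periodic_pt f x q /\ (2 <= q)%nat /\
      Rabs (orn f x q - r) < eps.

Definition gt_a (a x y : R) : Prop := (x < y /\ y < a) \/ (x > y /\ y > a).

Definition phi (f : R -> R) (a y : R) : R :=
  if Rlt_dec a y then (if Rlt_dec (f y) a then 1 else 0) else 0.

Definition is_code (f : R -> R) (a x : R) (q : nat) (rho : R) (L : R -> R) : Prop :=
  (forall x0, in_orbit f x q x0 -> (forall y, in_orbit f x q y -> x0 <= y) -> L x0 = 0) /\
  (forall y, in_orbit f x q y -> L (f y) = L y + rho - phi f a y).

(* Since a is the only fixed point, f moves points left of a to the right
   and vice versa, so a sign change at y means that f moves y across a, and
   the over-rotation number of a periodic orbit is (side switches)/(2 period).
   If u >_a v in P, L u > L v and f^n v = u (0 < n < q), the code identity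
   L u - L v = n p/q - lc (lc = jumps from right to left) gives lc/n < p/q,
   and the segment v -> u has 2 lc switches.  The intervals [z,a] f-cover
   [f z, a]; with l, r the points of P closest to a, [l,a] and [r,a] cover
   each other.  Going m times around v -> u (one interval shrunk to avoid a),
   then to l, bouncing j times between l and r and back to v, is a covering
   loop of intervals; it carries a periodic orbit of over-rotation number
   (2 m lc + 2 j + C)/(2 (m n + 2 j + N)), and these are dense in [lc/n, 1/2]. *)

From Stdlib Require Import Reals Lra Lia Classical List.
Open Scope R_scope.

(** * 1. Covering lemmas for continuous maps of the real line *)

Lemma continuity_eps_delta (g : R -> R) : continuity g -> forall x eps, eps > 0 ->
  exists d, d > 0 /\ forall y, Rabs (y - x) < d -> Rabs (g y - g x) < eps.
Proof.
  intros Hg x eps He. destruct (Hg x eps He) as [d [Hd Hball]].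
  exists d; split; auto. intros y Hy.
  destruct (Req_dec_T y x) as [->|Hne].
  - rewrite Rminus_diag, Rabs_R0; lra.
  - apply (Hball y). split; [split; [exact I | auto] | exact Hy].
Qed.

Lemma eps_delta_continuity (g : R -> R) : (forall x eps, eps > 0 ->
  exists d, d > 0 /\ forall y, Rabs (y - x) < d -> Rabs (g y - g x) < eps) -> continuity g.
Proof.
  intros Hg x eps He. destruct (Hg x eps He) as [d [Hd Hball]].
  exists d; split; auto. intros y [_ Hy]. apply Hball, Hy.
Qed.

(* A map continuous on [0,1] is extended to R by precomposing with the
   retraction [clamp] onto [0,1]; this lets us use Stdlib's [continuity]. *)
Definition clamp (y : R) : R := Rmax 0 (Rmin 1 y).

Lemma clamp_in y : 0 <= clamp y <= 1.
Proof. unfold clamp, Rmax, Rmin. repeat destruct Rle_dec; lra. Qed.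

Lemma clamp_id y : 0 <= y <= 1 -> clamp y = y.
Proof. intros. unfold clamp, Rmax, Rmin. repeat destruct Rle_dec; lra. Qed.

Lemma clamp_lipschitz x y : Rabs (clamp y - clamp x) <= Rabs (y - x).
Proof.
  unfold clamp, Rmax, Rmin. repeat destruct Rle_dec;
  unfold Rabs; repeat destruct Rcase_abs; lra.
Qed.

Definition extend (f : R -> R) (y : R) : R := f (clamp y).

Lemma extend_continuity f : continuous_on_unit f -> continuity (extend f).
Proof.
  intros Hf. apply eps_delta_continuity. intros x eps He.
  destruct (Hf (clamp x) (clamp_in x) eps He) as [d [Hd Hball]].
  exists d; split; auto. intros y Hy. unfold extend.
  apply Hball; [apply clamp_in|]. eapply Rle_lt_trans; [apply clamp_lipschitz | exact Hy].
Qed.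

Lemma extend_eq f y : 0 <= y <= 1 -> extend f y = f y.
Proof. intros. unfold extend. rewrite clamp_id; auto. Qed.

Lemma continuity_reflect (g : R -> R) : continuity g -> continuity (fun y => g (- y)).
Proof.
  intros Hg. change (fun y => g (- y)) with (comp g (fun y => - y)).
  apply continuity_comp; auto. apply continuity_opp, derivable_continuous, derivable_id.
Qed.

Lemma continuity_sub_const (g : R -> R) c : continuity g -> continuity (fun y => g y - c).
Proof. intros Hg. apply continuity_minus; auto. apply continuity_const. intros ? ?; auto. Qed.

Lemma ivt_between (g : R -> R) s s' c d : continuity g -> s <= s' ->
  ((g s = c /\ g s' = d) \/ (g s = d /\ g s' = c)) ->
  forall w, c <= w <= d -> exists y, s <= y <= s' /\ g y = w.
Proof.
  intros Hg Hss Hends w Hw.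
  destruct (IVT_cor (fun y => g y - w) s s') as [z [Hz Hz']]; auto.
  - apply continuity_sub_const; auto.
  - destruct Hends as [[-> ->]|[-> ->]]; nra.
  - exists z; split; auto; lra.
Qed.

Lemma last_hit (g : R -> R) x1 x2 c : continuity g -> x1 < x2 -> g x1 <= c -> c < g x2 ->
  exists s, x1 <= s < x2 /\ g s = c /\ forall y, s < y <= x2 -> g y > c.
Proof.
  intros Hg H12 H1 H2.
  set (E := fun y => x1 <= y <= x2 /\ g y <= c).
  assert (Hb : bound E) by (exists x2; intros y [Hy _]; lra).
  assert (Hn : exists y, E y) by (exists x1; split; lra).
  destruct (completeness E Hb Hn) as [s [Hub Hlub]].
  assert (Hs1 : x1 <= s) by (apply Hub; split; lra).
  assert (Hs2 : s <= x2) by (apply Hlub; intros y [Hy _]; lra).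
  assert (Hgs : g s <= c).
  { destruct (Rle_dec (g s) c) as [h|h]; auto. exfalso.
    destruct (continuity_eps_delta g Hg s (g s - c)) as [d [Hd Hd']]; [lra|].
    assert (Hex : exists y, E y /\ s - d < y).
    { apply NNPP. intro Hno. assert (s <= s - d); [|lra].
      apply Hlub. intros y Ey. destruct (Rle_dec y (s - d)); auto.
      exfalso; apply Hno; exists y; split; auto; lra. }
    destruct Hex as [y [[Hy Hgy] Hy2]].
    assert (y <= s) by (apply Hub; split; auto).
    assert (Hys : Rabs (y - s) < d) by (unfold Rabs; destruct Rcase_abs; lra).
    specialize (Hd' y Hys). unfold Rabs in Hd'; destruct Rcase_abs in Hd'; lra. }
  assert (Hs2' : s < x2) by (destruct (Req_dec_T s x2); subst; lra).
  assert (Hgt : forall y, s < y <= x2 -> g y > c).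
  { intros y Hy. destruct (Rle_dec (g y) c) as [h|h]; [|lra].
    assert (y <= s) by (apply Hub; split; lra). lra. }
  exists s. split; [lra|]. split; auto.
  destruct (Rle_dec c (g s)) as [h|h]; [lra|]. exfalso.
  destruct (IVT (fun y => g y - c) s x2) as [z [Hz Hz']];
    [apply continuity_sub_const; auto | lra | lra | lra |].
  destruct (Req_dec_T z s); [subst; lra|].
  assert (g z > c) by (apply Hgt; lra). lra.
Qed.

Lemma first_hit (g : R -> R) x1 x2 d : continuity g -> x1 < x2 -> g x1 < d -> d <= g x2 ->
  exists s, x1 < s <= x2 /\ g s = d /\ forall y, x1 <= y < s -> g y < d.
Proof.
  intros Hg H12 H1 H2.
  assert (Hh : continuity (fun y => - g (- y))) by (apply continuity_opp, continuity_reflect; auto).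
  destruct (last_hit (fun y => - g (- y)) (- x2) (- x1) (- d) Hh) as [s [Hs [Hs2 Hs3]]];
    try rewrite Ropp_involutive; try lra.
  exists (- s). split; [lra|]. split; [lra|].
  intros y Hy. specialize (Hs3 (- y)). rewrite Ropp_involutive in Hs3.
  assert (- g y > - d) by (apply Hs3; lra). lra.
Qed.

Lemma exact_cover_ordered (g : R -> R) yc yd c d : continuity g -> yc < yd ->
  g yc = c -> g yd = d -> c < d ->
  exists s s', yc <= s <= s' /\ s' <= yd /\ (forall y, s <= y <= s' -> c <= g y <= d) /\
    (forall w, c <= w <= d -> exists y, s <= y <= s' /\ g y = w).
Proof.
  intros Hg Hy Hc Hd Hcd.
  destruct (last_hit g yc yd c Hg Hy) as [s [Hs [Hgs Hafter]]]; try lra.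
  destruct (first_hit g s yd d Hg) as [s' [Hs' [Hgs' Hbefore]]]; try lra.
  exists s, s'. split; [lra|]. split; [lra|]. split.
  - intros y Hy'. destruct (Req_dec_T y s) as [->|h1]; [lra|].
    destruct (Req_dec_T y s') as [->|h2]; [lra|].
    assert (g y > c) by (apply Hafter; lra). assert (g y < d) by (apply Hbefore; lra). lra.
  - apply ivt_between; auto; lra.
Qed.

Lemma exact_cover (g : R -> R) al be c d : continuity g -> c <= d ->
  (forall w, c <= w <= d -> exists y, al <= y <= be /\ g y = w) ->
  exists s s', al <= s <= s' /\ s' <= be /\ (forall y, s <= y <= s' -> c <= g y <= d) /\
    (forall w, c <= w <= d -> exists y, s <= y <= s' /\ g y = w).
Proof.
  intros Hg Hcd Hcov.
  destruct (Hcov c) as [yc [Hyc Hgc]]; [lra|].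
  destruct (Hcov d) as [yd [Hyd Hgd]]; [lra|].
  destruct (Req_dec_T c d) as [<-|Hne].
  { exists yc, yc. split; [lra|]. split; [lra|]. split.
    - intros y Hy. replace y with yc by lra. lra.
    - intros w Hw. exists yc. split; lra. }
  destruct (Rlt_le_dec yc yd) as [Hlt|Hle].
  - destruct (exact_cover_ordered g yc yd c d) as [s [s' [H1 [H2 [H3 H4]]]]]; auto; [lra|].
    exists s, s'. split; [lra|]. split; [lra|]. auto.
  - assert (yd <> yc) by (intro; subst; lra).
    destruct (exact_cover_ordered (fun y => g (- y)) (- yc) (- yd) c d)
      as [s [s' [H1 [H2 [H3 H4]]]]]; try (rewrite Ropp_involutive; auto); try lra.
    { apply continuity_reflect; auto. }
    exists (- s'), (- s). split; [lra|]. split; [lra|]. split.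
    + intros y Hy. specialize (H3 (- y)). rewrite Ropp_involutive in H3. apply H3; lra.
    + intros w Hw. destruct (H4 w Hw) as [y [Hy Hy']]. exists (- y). split; [lra|auto].
Qed.

(** Loops of intervals.  An interval is a pair (lo, hi); [chain g W J]
    says that each interval of the list W g-covers the next one and the last
    one g-covers J. *)
Definition in_int (J : R * R) (y : R) : Prop := fst J <= y <= snd J.

Definition covers (g : R -> R) (J1 J2 : R * R) : Prop :=
  forall w, in_int J2 w -> exists y, in_int J1 y /\ g y = w.

Definition subint (J1 J2 : R * R) : Prop := forall w, in_int J1 w -> in_int J2 w.

Lemma covers_shrink g I J J' : covers g I J -> subint J' J -> covers g I J'.
Proof. unfold covers, subint; intros h1 h2 w hw; auto. Qed.

Definition chain_head (W : list (R * R)) (J : R * R) : R * R :=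
  match W with nil => J | K :: _ => K end.

Fixpoint chain (g : R -> R) (W : list (R * R)) (J : R * R) : Prop :=
  match W with nil => True | K :: W' => covers g K (chain_head W' J) /\ chain g W' J end.

Lemma chain_app g W1 W2 J :
  chain g W1 (chain_head W2 J) -> chain g W2 J -> chain g (W1 ++ W2) J.
Proof.
  induction W1 as [|K W1 IH]; simpl; auto. intros [h1 h2] h3. split; auto.
  destruct W1; simpl in *; auto.
Qed.

Lemma chain_head_app W1 W2 J : chain_head (W1 ++ W2) J = chain_head W1 (chain_head W2 J).
Proof. destruct W1; simpl; auto. Qed.

Lemma iter_S (g : R -> R) n y : iter g (S n) y = iter g n (g y).
Proof. induction n; simpl; auto. simpl in IHn. rewrite IHn. auto. Qed.

Lemma iter_add (g : R -> R) m n y : iter g (m + n) y = iter g m (iter g n y).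
Proof. induction m; simpl; auto. rewrite IHm; auto. Qed.

Lemma iter_mul (g : R -> R) y d k : iter g d y = y -> iter g (k * d) y = y.
Proof. intros Hd. induction k; simpl; auto. rewrite iter_add, IHk, Hd; auto. Qed.

Lemma iter_fixed (g : R -> R) a s : g a = a -> iter g s a = a.
Proof. intros h. induction s; simpl; auto. rewrite IHs; auto. Qed.

Lemma iter_continuity g n : continuity g -> continuity (iter g n).
Proof.
  intros Hg. induction n; simpl.
  - apply derivable_continuous, derivable_id.
  - change (fun x => g (iter g n x)) with (comp g (iter g n)). apply continuity_comp; auto.
Qed.

Lemma chain_follow (g : R -> R) : continuity g -> forall W J, chain g W J -> fst J <= snd J ->
  exists s s', s <= s' /\ (forall y, s <= y <= s' -> in_int (chain_head W J) y) /\
  (forall t, (t < length W)%nat -> forall y, s <= y <= s' -> in_int (nth t W (0,0)) (iter g t y)) /\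
  (forall y, s <= y <= s' -> in_int J (iter g (length W) y)) /\
  (forall w, in_int J w -> exists y, s <= y <= s' /\ iter g (length W) y = w).
Proof.
  intros Hg W. induction W as [|I W IH]; intros J Hch HJ.
  - exists (fst J), (snd J). simpl. split; auto. split; [unfold in_int; auto|].
    split; [intros; lia|]. split; [unfold in_int; auto|]. intros w Hw; exists w; split; auto.
  - destruct Hch as [Hc Hch]. destruct (IH J Hch HJ) as [s1 [s1' [H1 [H2 [H3 [H4 H5]]]]]].
    destruct (exact_cover g (fst I) (snd I) s1 s1' Hg H1) as [s [s' [K1 [K2 [K3 K4]]]]].
    { intros w Hw. apply Hc. apply H2; auto. }
    exists s, s'. split; [lra|]. split; [intros y Hy; simpl; unfold in_int; lra|].
    split; [|split].
    + intros t Ht y Hy. destruct t as [|t]; simpl nth.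
      * simpl; unfold in_int; lra.
      * rewrite iter_S. apply H3; [simpl in Ht; lia | apply K3; auto].
    + intros y Hy. simpl length. rewrite iter_S. apply H4, K3; auto.
    + intros w Hw. destruct (H5 w Hw) as [y1 [Hy1 Hy1']].
      destruct (K4 y1 Hy1) as [y [Hy Hy']]. exists y. split; auto.
      simpl length. rewrite iter_S, Hy'. auto.
Qed.

Lemma loop_fixed_point (g : R -> R) : continuity g -> forall I W,
  chain g (I :: W) I -> fst I <= snd I ->
  exists y, in_int I y /\ iter g (S (length W)) y = y /\
    (forall t, (t < S (length W))%nat -> in_int (nth t (I :: W) (0,0)) (iter g t y)).
Proof.
  intros Hg I W Hch HI.
  destruct (chain_follow g Hg (I :: W) I Hch HI) as [s [s' [H1 [H2 [H3 [H4 H5]]]]]].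
  simpl chain_head in H2. simpl length in *.
  assert (Hs : in_int I s) by (apply H2; lra). assert (Hs' : in_int I s') by (apply H2; lra).
  destruct (H5 s Hs) as [y1 [Hy1 E1]]. destruct (H5 s' Hs') as [y2 [Hy2 E2]].
  set (h := fun y => iter g (S (length W)) y - y).
  assert (Hh : continuity h).
  { apply continuity_minus; [apply iter_continuity; auto | apply derivable_continuous, derivable_id]. }
  assert (Hroot : exists z, Rmin y1 y2 <= z <= Rmax y1 y2 /\ h z = 0).
  { unfold Rmin, Rmax. destruct (Rle_dec y1 y2) as [L|L].
    - destruct (IVT_cor h y1 y2 Hh L) as [z [Hz Hz']]; [unfold h; rewrite E1, E2; nra|].
      exists z; auto.
    - destruct (IVT_cor h y2 y1 Hh) as [z [Hz Hz']]; [lra | unfold h; rewrite E1, E2; nra|].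
      exists z; auto. }
  destruct Hroot as [z [Hz Hz']]. unfold h in Hz'.
  assert (Hzs : s <= z <= s') by (unfold Rmin, Rmax in Hz; destruct Rle_dec; lra).
  exists z. split; [apply H2; lra|]. split; [lra|].
  intros t Ht. apply H3; auto.
Qed.

(** * 2. Density of the over-rotation numbers of the constructed loops *)

Lemma least_nat (P : nat -> Prop) N : P N ->
  exists d, (d <= N)%nat /\ P d /\ forall i, (i < d)%nat -> ~ P i.
Proof.
  revert P. induction N; intros P HP.
  - exists 0%nat. split; auto. split; auto. intros; lia.
  - destruct (classic (P 0%nat)) as [h|h].
    + exists 0%nat. split; [lia|]. split; auto. intros; lia.
    + destruct (IHN (fun i => P (S i)) HP) as [d [Hd [Pd Hm]]].
      exists (S d). split; [lia|]. split; auto.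
      intros i Hi. destruct i; auto. apply Hm. lia.
Qed.

Lemma finite_argmax (P : nat -> Prop) (g : nat -> R) N : (exists i, (i < N)%nat /\ P i) ->
  exists i, (i < N)%nat /\ P i /\ forall j, (j < N)%nat -> P j -> g j <= g i.
Proof.
  induction N; intros [i [Hi Pi]]; [lia|].
  destruct (classic (exists i, (i < N)%nat /\ P i)) as [h|h].
  - destruct (IHN h) as [k [Hk [Pk Hmax]]].
    destruct (classic (P N /\ g k < g N)) as [[pn hg]|hn].
    + exists N. split; [lia|]. split; auto. intros j Hj Pj.
      destruct (Nat.eq_dec j N); [subst; lra|]. specialize (Hmax j ltac:(lia) Pj). lra.
    + exists k. split; [lia|]. split; auto. intros j Hj Pj.
      destruct (Nat.eq_dec j N); [subst; apply Rnot_lt_le; intro; apply hn; auto | apply Hmax; auto; lia].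
  - exists N. split; [lia|]. split.
    + destruct (Nat.eq_dec i N); [subst; auto|]. exfalso; apply h; exists i; split; auto; lia.
    + intros j Hj Pj. destruct (Nat.eq_dec j N); [subst; lra|].
      exfalso; apply h; exists j; split; auto; lia.
Qed.

Lemma nat_above (X : R) : exists m : nat, INR m > X.
Proof.
  destruct (INR_archimed 1 X) as [m Hm]; [lra|]. exists m. lra.
Qed.

Lemma div_le_cross x y d1 d2 : 0 < d1 -> 0 < d2 -> x * d2 <= y * d1 -> x / d1 <= y / d2.
Proof.
  intros h1 h2 h. apply (Rmult_le_reg_r (d1 * d2)); [nra|].
  replace (x / d1 * (d1 * d2)) with (x * d2) by (field; lra).
  replace (y / d2 * (d1 * d2)) with (y * d1) by (field; lra). lra.
Qed.

(* The over-rotation number of a loop going m times around a segment of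
   length n with s side switches, bouncing j times between l and r (2j+1
   nodes, all switches), with connecting pieces of total length N and C
   switches. *)
Definition loop_ratio (s n C N m j : nat) : R :=
  (INR m * INR s + 2 * INR j + INR C) / (2 * (INR m * INR n + 2 * INR j + INR N)).

Section Ratios.

Variables (s n C N m : nat).
Hypothesis Hn : (1 <= n)%nat.
Hypothesis Hs : (s <= n)%nat.
Hypothesis HCN : (C <= N)%nat.
Hypothesis Hm : (1 <= m)%nat.

Let Hn' : INR n >= 1.
Proof. apply Rle_ge, (le_INR 1); auto. Qed.
Let Hs' : INR s <= INR n.
Proof. apply le_INR; auto. Qed.
Let HCN' : INR C <= INR N.
Proof. apply le_INR; auto. Qed.
Let Hm' : INR m >= 1.
Proof. apply Rle_ge, (le_INR 1); auto. Qed.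

Lemma loop_ratio_start :
  Rabs (loop_ratio s n C N m 0 - INR s / (2 * INR n)) <= (INR C + INR N) / (2 * INR m).
Proof.
  pose proof (pos_INR s). pose proof (pos_INR C). pose proof (pos_INR N).
  unfold loop_ratio. change (INR 0) with 0.
  replace ((INR m * INR s + 2 * 0 + INR C) / (2 * (INR m * INR n + 2 * 0 + INR N)) - INR s / (2 * INR n))
    with ((INR n * INR C - INR s * INR N) / (2 * INR n * (INR m * INR n + INR N)))
    by (field; split; nra).
  unfold Rdiv. rewrite Rabs_mult, (Rabs_pos_eq (/ _)) by (apply Rlt_le, Rinv_0_lt_compat; nra).
  fold (Rabs (INR n * INR C - INR s * INR N) / (2 * INR n * (INR m * INR n + INR N))).
  apply div_le_cross; [nra|nra|].
  assert (Rabs (INR n * INR C - INR s * INR N) <= INR n * (INR C + INR N))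
    by (unfold Rabs; destruct Rcase_abs; nra).
  pose proof (Rabs_pos (INR n * INR C - INR s * INR N)).
  assert (INR m <= INR m * INR n + INR N) by nra.
  apply Rle_trans with (INR n * (INR C + INR N) * (2 * INR m)); [apply Rmult_le_compat_r; nra | nra].
Qed.

Lemma loop_ratio_step j : loop_ratio s n C N m (S j) <= loop_ratio s n C N m j + 1 / INR m.
Proof.
  unfold loop_ratio. rewrite S_INR. pose proof (pos_INR j). pose proof (pos_INR s).
  pose proof (pos_INR C). pose proof (pos_INR N).
  set (A := INR m * INR s + INR C). set (D := INR m * INR n + INR N).
  assert (HAD : A <= D) by (unfold A, D; nra).
  assert (HDm : D >= INR m) by (unfold D; nra).
  assert (HA0 : A >= 0) by (unfold A; nra).
  replace (INR m * INR s + 2 * (INR j + 1) + INR C) with (A + 2 * INR j + 2) by (unfold A; ring).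
  replace (INR m * INR n + 2 * (INR j + 1) + INR N) with (D + 2 * INR j + 2) by (unfold D; ring).
  replace (INR m * INR s + 2 * INR j + INR C) with (A + 2 * INR j) by (unfold A; ring).
  replace (INR m * INR n + 2 * INR j + INR N) with (D + 2 * INR j) by (unfold D; ring).
  replace ((A + 2 * INR j + 2) / (2 * (D + 2 * INR j + 2)))
    with ((A + 2 * INR j) / (2 * (D + 2 * INR j)) + (D - A) / ((D + 2 * INR j) * (D + 2 * INR j + 2)))
    by (field; nra).
  apply Rplus_le_compat_l.
  apply Rle_trans with (1 / D); [|unfold Rdiv; rewrite !Rmult_1_l; apply Rinv_le_contravar; nra].
  apply div_le_cross; nra.
Qed.

Lemma loop_ratio_near_half eps : eps > 0 -> exists J, 1 / 2 - loop_ratio s n C N m J < eps.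
Proof.
  intros He. pose proof (pos_INR s). pose proof (pos_INR C). pose proof (pos_INR N).
  set (D := INR m * INR n + INR N).
  assert (HDp : D > 0) by (unfold D; nra).
  destruct (nat_above (D / eps)) as [J HJ]. exists J. unfold loop_ratio.
  assert (HJ' : D < eps * INR J).
  { apply (Rmult_lt_compat_l eps) in HJ; auto.
    replace (eps * (D / eps)) with D in HJ by (field; lra). lra. }
  fold D. replace (INR m * INR n + 2 * INR J + INR N) with (D + 2 * INR J) by (unfold D; ring).
  replace (1 / 2 - (INR m * INR s + 2 * INR J + INR C) / (2 * (D + 2 * INR J)))
    with ((D - (INR m * INR s + INR C)) / (2 * (D + 2 * INR J))) by (field; nra).
  apply (Rmult_lt_reg_r (2 * (D + 2 * INR J))); [nra|].
  unfold Rdiv. rewrite Rmult_assoc, Rinv_l, Rmult_1_r by nra. unfold D in *. nra.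
Qed.

End Ratios.

(* Every r in [s/(2n), 1/2] is a limit of loop ratios: take m large, then the
   first number of bounces j bringing the ratio above r - eps. *)
Lemma loop_ratio_dense (s n C N : nat) : (1 <= n)%nat -> (s <= n)%nat -> (C <= N)%nat ->
  forall r eps, INR s / (2 * INR n) <= r <= 1 / 2 -> eps > 0 ->
  exists m j, (1 <= m)%nat /\ Rabs (loop_ratio s n C N m j - r) < eps.
Proof.
  intros Hn Hs HCN r eps Hr He.
  pose proof (pos_INR C). pose proof (pos_INR N).
  destruct (nat_above ((INR C + INR N + 2) / eps)) as [m0 Hm0].
  set (m := S m0).
  assert (Hm1 : (1 <= m)%nat) by (unfold m; lia).
  assert (Hm : INR m > (INR C + INR N + 2) / eps) by (unfold m; rewrite S_INR; lra).
  assert (Hmpos : INR m >= 1) by (unfold m; rewrite S_INR; pose proof (pos_INR m0); lra).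
  assert (Hme : INR C + INR N + 2 < eps * INR m).
  { apply (Rmult_lt_compat_l eps) in Hm; auto.
    replace (eps * ((INR C + INR N + 2) / eps)) with (INR C + INR N + 2) in Hm by (field; lra). lra. }
  assert (Hstart := loop_ratio_start s n C N m Hn Hs HCN Hm1).
  assert (Hsmall : (INR C + INR N) / (2 * INR m) < eps).
  { apply (Rmult_lt_reg_r (2 * INR m)); [nra|]. unfold Rdiv.
    rewrite Rmult_assoc, Rinv_l, Rmult_1_r by nra. nra. }
  assert (Hinv : 1 / INR m < eps).
  { apply (Rmult_lt_reg_r (INR m)); [lra|]. unfold Rdiv. rewrite Rmult_assoc, Rinv_l by lra. nra. }
  exists m.
  destruct (Rle_dec r (loop_ratio s n C N m 0)) as [Hc|Hc].
  { exists 0%nat. split; auto.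
    unfold Rabs at 1. destruct Rcase_abs; [lra|].
    unfold Rabs in Hstart; destruct Rcase_abs in Hstart; lra. }
  destruct (loop_ratio_near_half s n C N m Hn Hs HCN Hm1 eps He) as [J HJ].
  destruct (least_nat (fun j => loop_ratio s n C N m j > r - eps) J) as [j [_ [Pj Hmin]]]; [lra|].
  exists j. split; auto.
  destruct j as [|j'].
  - unfold Rabs; destruct Rcase_abs; lra.
  - assert (loop_ratio s n C N m j' <= r - eps) by (apply Rnot_gt_le, (Hmin j'); lia).
    pose proof (loop_ratio_step s n C N m Hn Hs HCN Hm1 j').
    unfold Rabs; destruct Rcase_abs; lra.
Qed.

Definition hull (x y : R) : R * R := (Rmin x y, Rmax x y).

Lemma hull_covers (g : R -> R) x y : continuity g -> covers g (hull x y) (hull (g x) (g y)).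
Proof.
  intros Hg w Hw. unfold in_int, hull in *; simpl in *.
  destruct (Rle_dec x y) as [L|L].
  - destruct (IVT_cor (fun z => g z - w) x y) as [z [Hz Hz']];
      [apply continuity_sub_const; auto | auto | |].
    + unfold Rmin, Rmax in Hw. destruct Rle_dec in Hw; nra.
    + exists z. unfold Rmin, Rmax. destruct Rle_dec; split; lra.
  - destruct (IVT_cor (fun z => g z - w) y x) as [z [Hz Hz']];
      [apply continuity_sub_const; auto | lra | |].
    + unfold Rmin, Rmax in Hw. destruct Rle_dec in Hw; nra.
    + exists z. unfold Rmin, Rmax. destruct Rle_dec; split; lra.
Qed.

(** * 3. Maps of [0,1] with a unique fixed point *)

Section UniqueFixedPoint.

Variables (f : R -> R) (a : R).
Hypothesis Hmap : maps_unit f.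
Hypothesis Hcont : continuous_on_unit f.
Hypothesis Ha : 0 <= a <= 1.
Hypothesis Hfa : f a = a.
Hypothesis Huniq : forall z, 0 <= z <= 1 -> f z = z -> z = a.

Definition span (z : R) : R * R := hull z a.

(* Left of a, f moves points right: f - id has no zero on [0,a) and f 0 > 0. *)
Lemma moves_right z : 0 <= z <= 1 -> z < a -> f z > z.
Proof.
  intros Hz Hza.
  destruct (Rlt_dec z (f z)) as [h|h]; auto. exfalso.
  assert (f z <> z) by (intro E; apply Huniq in E; auto; lra).
  assert (f 0 > 0).
  { destruct (Hmap 0) as [h1 h2]; [lra|].
    destruct (Req_dec_T (f 0) 0) as [E|E]; [apply Huniq in E; lra | lra]. }
  destruct (IVT_cor (fun y => extend f y - y) 0 z) as [w [Hw Hw']].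
  - apply continuity_minus; [apply extend_continuity; auto | apply derivable_continuous, derivable_id].
  - lra.
  - rewrite !extend_eq; lra || nra.
  - rewrite extend_eq in Hw' by lra. assert (w = a) by (apply Huniq; lra). lra.
Qed.

Lemma moves_left z : 0 <= z <= 1 -> a < z -> f z < z.
Proof.
  intros Hz Hza.
  destruct (Rlt_dec (f z) z) as [h|h]; auto. exfalso.
  assert (f z <> z) by (intro E; apply Huniq in E; auto; lra).
  assert (f 1 < 1).
  { destruct (Hmap 1) as [h1 h2]; [lra|].
    destruct (Req_dec_T (f 1) 1) as [E|E]; [apply Huniq in E; lra | lra]. }
  destruct (IVT_cor (fun y => extend f y - y) z 1) as [w [Hw Hw']].
  - apply continuity_minus; [apply extend_continuity; auto | apply derivable_continuous, derivable_id].
  - lra.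
  - rewrite !extend_eq; lra || nra.
  - rewrite extend_eq in Hw' by lra. assert (w = a) by (apply Huniq; lra). lra.
Qed.

Lemma iter_unit n y : 0 <= y <= 1 -> 0 <= iter f n y <= 1.
Proof. intros Hy. induction n; simpl; auto. Qed.

Lemma iter_extend n y : 0 <= y <= 1 -> iter (extend f) n y = iter f n y.
Proof.
  intros Hy. induction n; simpl; auto. rewrite IHn. apply extend_eq, iter_unit; auto.
Qed.

Lemma span_covers_image z : 0 <= z <= 1 -> covers (extend f) (span z) (span (f z)).
Proof.
  intros Hz. unfold span. pose proof (hull_covers (extend f) z a (extend_continuity f Hcont)) as C.
  rewrite !extend_eq, Hfa in C; auto.
Qed.

Lemma span_mono z w : (z <= w <= a) \/ (a <= w <= z) -> subint (span w) (span z).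
Proof. intros Hc y. unfold in_int, span, hull, Rmin, Rmax; simpl. repeat destruct Rle_dec; lra. Qed.

(* Which side of a a point lies on ([true] = right). *)
Definition side (z : R) : bool := if Rlt_dec a z then true else false.

Lemma side_span z w : in_int (span z) w -> w <> a -> z <> a -> side w = side z.
Proof.
  unfold in_int, span, hull, side, Rmin, Rmax. simpl. intros Hw h1 h2.
  destruct (Rle_dec z a); destruct Hw; destruct (Rlt_dec a w); destruct (Rlt_dec a z); auto; lra.
Qed.

Lemma sign_change_side w : 0 <= w <= 1 -> w <> a -> f w <> a ->
  sign_change f w = if Bool.eqb (side w) (side (f w)) then 0%nat else 1%nat.
Proof.
  intros Hw Hwa Hfwa. assert (Hfw := Hmap w Hw).
  unfold sign_change, side.
  destruct (Rlt_dec a w) as [h1|h1]; destruct (Rlt_dec a (f w)) as [h2|h2]; simpl.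
  - pose proof (moves_left w Hw h1). pose proof (moves_left (f w) Hfw h2).
    destruct Rlt_dec; auto; nra.
  - pose proof (moves_left w Hw h1). pose proof (moves_right (f w) Hfw ltac:(lra)).
    destruct Rlt_dec; auto; nra.
  - pose proof (moves_right w Hw ltac:(lra)). pose proof (moves_left (f w) Hfw h2).
    destruct Rlt_dec; auto; nra.
  - pose proof (moves_right w Hw ltac:(lra)). pose proof (moves_right (f w) Hfw ltac:(lra)).
    destruct Rlt_dec; auto; nra.
Qed.

Lemma periodic_avoids_fixed y N : y <> a -> (1 <= N)%nat -> iter f N y = y ->
  forall t, iter f t y <> a.
Proof.
  intros Hya HN HNy t Ht. apply Hya. rewrite <- (iter_mul f y N (S t)) by auto.
  replace (S t * N)%nat with ((S t * N - t) + t)%nat by nia.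
  rewrite iter_add, Ht, iter_fixed; auto.
Qed.

(** * 4. Counting side switches along loops *)

Lemma num_sc_cons y n : num_sc_aux f y (S n) = (sign_change f y + num_sc_aux f (f y) n)%nat.
Proof.
  induction n; [simpl; lia|].
  change (num_sc_aux f y (S (S n)))
    with (num_sc_aux f y (S n) + sign_change f (iter f (S n) y))%nat.
  rewrite IHn. simpl (num_sc_aux f (f y) (S n)). rewrite iter_S. lia.
Qed.

Lemma num_sc_add y M d :
  num_sc_aux f y (M + d) = (num_sc_aux f y M + num_sc_aux f (iter f M y) d)%nat.
Proof.
  induction d; [rewrite Nat.add_0_r; simpl; lia|].
  rewrite Nat.add_succ_r. simpl. rewrite IHd.
  replace (iter f (M + d) y) with (iter f d (iter f M y)) by (rewrite Nat.add_comm, iter_add; auto).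
  lia.
Qed.

Lemma sign_change_le1 y : (sign_change f y <= 1)%nat.
Proof. unfold sign_change. destruct Rlt_dec; lia. Qed.

Lemma num_sc_le y n : (num_sc_aux f y n <= n)%nat.
Proof. induction n; simpl; auto. pose proof (sign_change_le1 (iter f n y)). lia. Qed.

Lemma num_sc_mul y d k : iter f d y = y -> num_sc_aux f y (k * d) = (k * num_sc_aux f y d)%nat.
Proof.
  intros Hd. induction k; simpl; auto.
  replace (d + k * d)%nat with (k * d + d)%nat by lia.
  rewrite num_sc_add, iter_mul; auto. lia.
Qed.

(* A point y <> a with f^N y = y lies on a non-fixed periodic orbit whose
   over-rotation number is the sign-change frequency over N steps (the
   minimal period divides N, and the count is N/d times the count over d). *)
Lemma orn_of_return y N : 0 <= y <= 1 -> y <> a -> (1 <= N)%nat -> iter f N y = y ->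
  exists d, periodic_pt f y d /\ (2 <= d)%nat /\
    orn f y d = INR (num_sc_aux f y N) / (2 * INR N).
Proof.
  intros Hy01 Hya HN HNy.
  destruct (least_nat (fun i => (0 < i)%nat /\ iter f i y = y) N) as [d [Hd [[Pd1 Pd2] Hmin]]].
  { split; [lia|auto]. }
  assert (Hd2 : (2 <= d)%nat).
  { destruct d as [|[|d]]; try lia. simpl in Pd2. exfalso. apply Hya, Huniq; auto. }
  assert (HNd : N = (N / d * d)%nat).
  { pose proof (Nat.div_mod N d ltac:(lia)) as E.
    destruct (Nat.eq_dec (N mod d) 0) as [h|h]; [rewrite h in E; lia|].
    exfalso. apply (Hmin (N mod d)); [apply Nat.mod_upper_bound; lia|].
    split; [lia|]. rewrite <- HNy at 2. rewrite E at 2.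
    rewrite Nat.add_comm, iter_add, Nat.mul_comm, iter_mul; auto. }
  exists d. split; [|split; auto].
  - split; [lia|]. split; auto. intros i Hi E. apply (Hmin i); [lia|]. split; [lia|auto].
  - unfold orn, num_sc. rewrite HNd at 1. rewrite num_sc_mul; auto.
    set (k := (N / d)%nat) in *.
    assert (1 <= k)%nat by (destruct k; simpl in HNd; lia).
    rewrite HNd, !mult_INR.
    assert (INR k > 0) by (apply lt_0_INR; lia).
    assert (INR d > 0) by (apply lt_0_INR; lia).
    field. lra.
Qed.

Fixpoint switches (rs : list R) (w : R) : nat :=
  match rs with
  | nil => 0%nat
  | z :: rs' => ((if Bool.eqb (side z) (side (hd w rs')) then 0 else 1) + switches rs' w)%nat
  end.

Lemma hd_app {A} (w : A) l1 l2 : hd w (l1 ++ l2) = hd (hd w l2) l1.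
Proof. destruct l1; simpl; auto. Qed.

Lemma switches_app l1 l2 w : switches (l1 ++ l2) w = (switches l1 (hd w l2) + switches l2 w)%nat.
Proof. induction l1 as [|z l1 IH]; simpl; auto. rewrite IH, hd_app. lia. Qed.

Lemma num_sc_switches rs y w : 0 <= y <= 1 -> (forall t, iter f t y <> a) ->
  (forall t, (t < length rs)%nat -> side (iter f t y) = side (nth t rs 0)) ->
  side (iter f (length rs) y) = side w ->
  num_sc_aux f y (length rs) = switches rs w.
Proof.
  revert y. induction rs as [|z rs IH]; intros y Hy01 Hav Hsd Hend; [simpl; auto|].
  cbn [length switches]. rewrite num_sc_cons.
  rewrite (sign_change_side y Hy01 (Hav 0%nat) (Hav 1%nat)).
  rewrite (IH (f y)).
  - assert (E1 : side y = side z) by (apply (Hsd 0%nat); simpl; lia).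
    assert (E2 : side (f y) = side (hd w rs)).
    { destruct rs as [|z' rs']; [exact Hend | apply (Hsd 1%nat); simpl; lia]. }
    rewrite E1, E2. auto.
  - apply Hmap; auto.
  - intros t. rewrite <- iter_S. auto.
  - intros t Ht. rewrite <- iter_S. apply (Hsd (S t)). simpl; lia.
  - rewrite <- iter_S. auto.
Qed.

(* A loop is described by nodes (z, J): J is an interval of the loop and z a
   reference point on the side of a where J lies.  A node is admissible if
   z <> a is in [0,1] and J is contained in [z,a]. *)
Notation node := (R * (R * R))%type.

Definition admissible (nd : node) : Prop :=
  fst nd <> a /\ 0 <= fst nd <= 1 /\ subint (snd nd) (span (fst nd)).

Lemma loop_point (nd : node) (W : list node) :
  Forall admissible (nd :: W) ->
  chain (extend f) (map snd (nd :: W)) (snd nd) -> fst (snd nd) <= snd (snd nd) ->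
  (exists nf, In nf (nd :: W) /\ forall w, in_int (snd nf) w -> w <> a) ->
  exists y, 0 <= y <= 1 /\ y <> a /\ iter f (length (nd :: W)) y = y /\
    forall t, (t < length (nd :: W))%nat -> side (iter f t y) = side (fst (nth t (nd :: W) nd)).
Proof.
  intros Hadm Hch Hnd [nf [Hin Hfree]].
  destruct (In_nth _ _ nd Hin) as [t0 [Ht0 Hnf]].
  assert (Hnth : forall t, (t < length (nd :: W))%nat -> admissible (nth t (nd :: W) nd)).
  { intros t Ht. rewrite Forall_forall in Hadm. apply Hadm, nth_In; auto. }
  destruct (loop_fixed_point (extend f) (extend_continuity f Hcont) (snd nd) (map snd W) Hch Hnd)
    as [y [Hy1 [Hy2 Hy3]]].
  rewrite length_map in Hy2, Hy3.
  destruct (Hnth 0%nat ltac:(simpl; lia)) as [Hza [Hz01 Hsub]]. simpl in Hza, Hz01, Hsub.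
  assert (Hy01 : 0 <= y <= 1).
  { specialize (Hsub y Hy1). unfold in_int, span, hull, Rmin, Rmax in Hsub; simpl in Hsub.
    destruct Rle_dec; lra. }
  assert (Hit : forall t, (t < S (length W))%nat -> in_int (snd (nth t (nd :: W) nd)) (iter f t y)).
  { intros t Ht. rewrite <- iter_extend by auto.
    replace (snd (nth t (nd :: W) nd)) with (nth t (map snd (nd :: W)) (0,0)); [auto|].
    rewrite nth_indep with (d' := snd nd) by (rewrite length_map; exact Ht). apply map_nth. }
  rewrite iter_extend in Hy2 by auto.
  assert (Hya : y <> a).
  { intro E. subst y. apply (Hfree a); auto. rewrite <- Hnf.
    assert (Hh := Hit t0 Ht0). rewrite iter_fixed in Hh; auto. }
  assert (Hav := periodic_avoids_fixed y (S (length W)) Hya ltac:(lia) Hy2).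
  exists y. split; auto. split; auto. split; auto.
  intros t Ht. destruct (Hnth t Ht) as [Hta [_ Htsub]]. apply side_span; auto.
Qed.

Lemma loop_orbit (nd : node) (W : list node) : Forall admissible (nd :: W) ->
  chain (extend f) (map snd (nd :: W)) (snd nd) -> fst (snd nd) <= snd (snd nd) ->
  (exists nf, In nf (nd :: W) /\ forall w, in_int (snd nf) w -> w <> a) ->
  exists y d, 0 <= y <= 1 /\ periodic_pt f y d /\ (2 <= d)%nat /\
    orn f y d = INR (switches (map fst (nd :: W)) (fst nd)) / (2 * INR (length (nd :: W))).
Proof.
  intros Hadm Hch Hnd Hfree.
  destruct (loop_point nd W Hadm Hch Hnd Hfree) as [y [Hy01 [Hya [Hret Hsides]]]].
  destruct (orn_of_return y (length (nd :: W)) Hy01 Hya ltac:(simpl; lia) Hret) as [d [Hd1 [Hd2 Hd3]]].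
  exists y, d. split; auto. split; auto. split; auto. rewrite Hd3.
  replace (length (nd :: W)) with (length (map fst (nd :: W))) by apply length_map.
  rewrite (num_sc_switches (map fst (nd :: W)) y (fst nd) Hy01); auto.
  - apply (periodic_avoids_fixed y (length (nd :: W))); auto. simpl; lia.
  - intros t Ht. rewrite length_map in Ht.
    rewrite nth_indep with (d' := fst nd) by (rewrite length_map; auto).
    rewrite map_nth. apply Hsides; auto.
  - rewrite length_map, Hret. apply (Hsides 0%nat). simpl; lia.
Qed.

(** * 5. Building loops of intervals *)

Fixpoint orbit_seg (z : R) (k : nat) : list node :=
  match k with
  | O => nil
  | S k' => (z, span z) :: orbit_seg (f z) k'
  end.

Lemma orbit_seg_length z k : length (orbit_seg z k) = k.
Proof. revert z; induction k; intros z; simpl; auto. Qed.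

Lemma orbit_seg_split z k1 k2 :
  orbit_seg z (k1 + k2) = orbit_seg z k1 ++ orbit_seg (iter f k1 z) k2.
Proof. revert z; induction k1; intros z; simpl; auto. rewrite IHk1, <- iter_S. auto. Qed.

Lemma orbit_seg_nth z k t : (t < k)%nat -> nth t (map fst (orbit_seg z k)) 0 = iter f t z.
Proof.
  revert z t; induction k; intros z t Ht; [lia|]. destruct t; simpl; auto.
  rewrite IHk by lia. rewrite <- iter_S. auto.
Qed.

Lemma orbit_seg_chain k z J : 0 <= z <= 1 -> subint J (span (iter f k z)) ->
  chain (extend f) (map snd (orbit_seg z k)) J.
Proof.
  revert z J. induction k; intros z J Hz HJ; simpl; auto. split.
  - destruct k; simpl.
    + eapply covers_shrink; [apply (span_covers_image z Hz) | exact HJ].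
    + apply (span_covers_image z Hz).
  - apply IHk; [apply Hmap; auto | rewrite <- iter_S; auto].
Qed.

Lemma orbit_seg_head k z J : subint J (span (iter f k z)) ->
  subint (chain_head (map snd (orbit_seg z k)) J) (span z).
Proof. destruct k; simpl; auto. intros _ w; auto. Qed.

Lemma orbit_seg_switches z k w : 0 <= z <= 1 -> (forall t, iter f t z <> a) ->
  side w = side (iter f k z) -> switches (map fst (orbit_seg z k)) w = num_sc_aux f z k.
Proof.
  intros Hz Hav Hw.
  assert (E := num_sc_switches (map fst (orbit_seg z k)) z w Hz Hav).
  rewrite length_map, orbit_seg_length in E. symmetry. apply E; auto.
  intros t Ht. rewrite orbit_seg_nth; auto.
Qed.

Lemma orbit_seg_admissible z k : 0 <= z <= 1 -> (forall t, iter f t z <> a) ->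
  Forall admissible (orbit_seg z k).
Proof.
  revert z; induction k; intros z Hz Hav; simpl; auto.
  constructor.
  - split; [apply (Hav 0%nat)|]. split; auto. intros w; auto.
  - apply IHk; [apply Hmap; auto | intros t; rewrite <- iter_S; auto].
Qed.

Fixpoint pingpong (l r : R) (j : nat) : list node :=
  match j with O => (l, span l) :: nil | S j' => (l, span l) :: (r, span r) :: pingpong l r j' end.

Lemma pingpong_length l r j : length (pingpong l r j) = (2 * j + 1)%nat.
Proof. induction j; simpl; auto. rewrite IHj. lia. Qed.

Lemma pingpong_chain l r J : covers (extend f) (span l) (span r) ->
  covers (extend f) (span r) (span l) -> subint J (span r) ->
  forall j, chain (extend f) (map snd (pingpong l r j)) J.
Proof.
  intros Clr Crl HJ j. induction j; simpl.
  - split; auto. eapply covers_shrink; eauto.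
  - split; [auto|]. split; [|auto]. destruct j; simpl; auto.
Qed.

Lemma pingpong_switches l r w : l < a -> a < r -> side w = true ->
  forall j, switches (map fst (pingpong l r j)) w = (2 * j + 1)%nat.
Proof.
  intros Hla Har Hw.
  assert (Hl : side l = false) by (unfold side; destruct Rlt_dec; [lra | auto]).
  assert (Hr : side r = true) by (unfold side; destruct Rlt_dec; [auto | lra]).
  induction j; simpl.
  - rewrite Hl, Hw. auto.
  - replace (hd w (map fst (pingpong l r j))) with l by (destruct j; auto).
    rewrite Hl, Hr, IHj. simpl. lia.
Qed.

Lemma pingpong_admissible l r j : 0 <= l <= 1 -> 0 <= r <= 1 -> l < a -> a < r ->
  Forall admissible (pingpong l r j).
Proof.
  intros Hl Hr Hla Har.
  assert (Hnl : admissible (l, span l)) by (split; [simpl; lra | split; [auto | intros w; auto]]).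
  assert (Hnr : admissible (r, span r)) by (split; [simpl; lra | split; [auto | intros w; auto]]).
  induction j; simpl; auto.
Qed.

Lemma repeat_chain (s : list node) v : (forall J, subint J (span v) ->
    chain (extend f) (map snd s) J /\ subint (chain_head (map snd s) J) (span v)) ->
  forall m J, subint J (span v) ->
    chain (extend f) (map snd (concat (repeat s m))) J /\
    subint (chain_head (map snd (concat (repeat s m))) J) (span v).
Proof.
  intros Hs m J HJ. induction m as [|m [IH1 IH2]]; simpl; [split; auto|].
  rewrite map_app, chain_head_app. destruct (Hs _ IH2) as [C1 C2].
  split; auto. apply chain_app; auto.
Qed.

Lemma repeat_switches (s : list R) v0 c : s <> nil -> hd 0 s = v0 ->
  (forall w, side w = side v0 -> switches s w = c) ->
  forall m w, side w = side v0 -> switches (concat (repeat s m)) w = (m * c)%nat.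
Proof.
  intros Hne Hhd Hs m w Hw. induction m; simpl; auto.
  rewrite switches_app, Hs, IHm; [lia|].
  destruct m; simpl; [auto|]. destruct s; [congruence|]. simpl in *. subst. auto.
Qed.

Section Construction.

(* The data of the construction: a segment v -> f^n v of the orbit of v
   returning to the same side of a and moving farther from a; a point z1 of
   it with an interval Jf inside [z1,a] which avoids a and still covers
   [f z1, a]; l < a < r whose intervals [l,a], [r,a] cover each other;
   a piece of orbit from v to the left of l; and a piece from r back to v. *)
Variables (v r l z1 : R) (n t1 t0 e : nat) (Jf : R * R).
Hypothesis Hv : 0 <= v <= 1.
Hypothesis Hva : forall t, iter f t v <> a.
Hypothesis Hr : 0 <= r <= 1.
Hypothesis Hra : forall t, iter f t r <> a.
Hypothesis Hl : 0 <= l <= 1.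
Hypothesis Hla : l < a.
Hypothesis Har : a < r.
Hypothesis Hret : subint (span v) (span (iter f n v)).
Hypothesis Hret_side : side (iter f n v) = side v.
Hypothesis Ht1 : (t1 < n)%nat.
Hypothesis Hz1 : z1 = iter f t1 v.
Hypothesis HJs : subint Jf (span z1).
Hypothesis HJc : covers (extend f) Jf (span (f z1)).
Hypothesis HJa : forall w, in_int Jf w -> w <> a.
Hypothesis Clr : covers (extend f) (span l) (span r).
Hypothesis Crl : covers (extend f) (span r) (span l).
Hypothesis Hto_l : subint (span l) (span (iter f (S t0) v)).
Hypothesis Hto_l_side : side (iter f (S t0) v) = side l.
Hypothesis Hback : iter f e r = v.

Let Hit t : 0 <= iter f t v <= 1.
Proof. apply iter_unit; auto. Qed.

Definition free_seg : list node :=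
  orbit_seg v t1 ++ (z1, Jf) :: orbit_seg (f z1) (n - S t1).

Lemma free_seg_points : map fst free_seg = map fst (orbit_seg v n).
Proof.
  unfold free_seg. replace n with (t1 + S (n - S t1))%nat at 2 by lia.
  rewrite orbit_seg_split, Hz1. simpl. rewrite !map_app. auto.
Qed.

Lemma free_seg_length : length free_seg = n.
Proof. unfold free_seg. rewrite length_app. simpl. rewrite !orbit_seg_length. lia. Qed.

Let Hz1_end : iter f (n - S t1) (f z1) = iter f n v.
Proof. rewrite Hz1, <- iter_S, <- iter_add. f_equal. lia. Qed.

Lemma free_seg_chain J : subint J (span v) ->
  chain (extend f) (map snd free_seg) J /\ subint (chain_head (map snd free_seg) J) (span v).
Proof.
  intros HJ.
  assert (HJ' : subint J (span (iter f (n - S t1) (f z1)))) by (rewrite Hz1_end; intros w hw; auto).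
  assert (Hfz1 : 0 <= f z1 <= 1) by (rewrite Hz1; apply Hmap, Hit).
  unfold free_seg. rewrite map_app, chain_head_app. split.
  - apply chain_app; [apply orbit_seg_chain; auto; simpl; rewrite <- Hz1; auto|].
    split; [|apply orbit_seg_chain; auto].
    eapply covers_shrink; [exact HJc | apply orbit_seg_head; auto].
  - apply orbit_seg_head. simpl. rewrite <- Hz1. auto.
Qed.

Lemma free_seg_admissible : Forall admissible free_seg.
Proof.
  unfold free_seg. apply Forall_app. split; [apply orbit_seg_admissible; auto|].
  constructor.
  - split; [rewrite Hz1; apply Hva|]. split; [rewrite Hz1; apply Hit | exact HJs].
  - apply orbit_seg_admissible; [rewrite Hz1; apply Hmap, Hit |].
    intros t. rewrite Hz1, <- iter_S, <- iter_add. auto.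
Qed.

Definition big_loop (m j : nat) : list node :=
  orbit_seg v (S t0) ++ pingpong l r j ++ orbit_seg r e ++ concat (repeat free_seg m).

Lemma big_loop_chain m j :
  chain (extend f) (map snd (big_loop m j)) (span v).
Proof.
  destruct (repeat_chain free_seg v free_seg_chain m (span v) (fun w h => h)) as [C4 S4].
  unfold big_loop. rewrite !map_app.
  apply chain_app; [|apply chain_app; [|apply chain_app]]; rewrite ?chain_head_app; auto.
  - apply orbit_seg_chain; auto. destruct j; simpl; auto.
  - apply pingpong_chain; auto. apply orbit_seg_head. rewrite Hback. auto.
  - apply orbit_seg_chain; auto. rewrite Hback. auto.
Qed.

Lemma big_loop_admissible m j : Forall admissible (big_loop m j).
Proof.
  unfold big_loop. repeat rewrite Forall_app. split; [|split; [|split]].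
  - apply orbit_seg_admissible; auto.
  - apply pingpong_admissible; auto.
  - apply orbit_seg_admissible; auto.
  - induction m; simpl; auto. apply Forall_app. split; auto. apply free_seg_admissible.
Qed.

Lemma big_loop_switches m j :
  switches (map fst (big_loop m j)) v =
    (num_sc_aux f v (S t0) + (2 * j + 1) + num_sc_aux f r e + m * num_sc_aux f v n)%nat.
Proof.
  assert (Hn : (1 <= n)%nat) by lia.
  assert (Hrep : forall w, side w = side v ->
    switches (concat (repeat (map fst free_seg) m)) w = (m * num_sc_aux f v n)%nat).
  { apply repeat_switches.
    - rewrite free_seg_points. destruct n; [lia | discriminate].
    - rewrite free_seg_points. destruct n; [lia | auto].
    - intros w Hw. rewrite free_seg_points. apply orbit_seg_switches; auto. congruence. }
  (* Reference points following each piece: v after the repetitions, then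
     r (or v = r) after the return piece. *)
  set (rest := concat (repeat (map fst free_seg) m)).
  assert (Hhd_rep : side (hd v rest) = side v).
  { unfold rest. destruct m; simpl; auto. rewrite hd_app, free_seg_points. destruct n; [lia | auto]. }
  assert (Hhd_back : side (hd v (map fst (orbit_seg r e) ++ rest)) = true).
  { destruct e; simpl.
    - simpl in Hback. subst. rewrite Hhd_rep. unfold side. destruct Rlt_dec; auto; lra.
    - unfold side. destruct Rlt_dec; auto; lra. }
  unfold big_loop. rewrite !map_app, concat_map, map_repeat. fold rest. rewrite !switches_app.
  rewrite orbit_seg_switches with (k := S t0); auto; [|destruct j; simpl; auto].
  rewrite pingpong_switches; auto.
  rewrite orbit_seg_switches with (z := r); auto; [|rewrite Hhd_rep, Hback; auto].
  unfold rest. rewrite Hrep; auto. lia.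
Qed.

Lemma big_loop_length m j : length (big_loop m j) = (S t0 + (2 * j + 1) + e + m * n)%nat.
Proof.
  unfold big_loop. rewrite !length_app, length_concat, !orbit_seg_length, pingpong_length.
  assert (E : forall k, list_sum (map (@length node) (repeat free_seg k)) = (k * n)%nat).
  { induction k; simpl; auto. rewrite IHk, free_seg_length. lia. }
  rewrite E. lia.
Qed.

Lemma big_loop_orbit m j : (1 <= m)%nat ->
  exists y d, 0 <= y <= 1 /\ periodic_pt f y d /\ (2 <= d)%nat /\
    orn f y d = INR (num_sc_aux f v (S t0) + (2 * j + 1) + num_sc_aux f r e + m * num_sc_aux f v n)
      / (2 * INR (S t0 + (2 * j + 1) + e + m * n)).
Proof.
  intros Hm.
  assert (Hcons : big_loop m j = (v, span v) :: (orbit_seg (f v) t0 ++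
     pingpong l r j ++ orbit_seg r e ++ concat (repeat free_seg m))) by auto.
  destruct (loop_orbit (v, span v) (orbit_seg (f v) t0 ++
     pingpong l r j ++ orbit_seg r e ++ concat (repeat free_seg m))) as [y [d [Y1 [Y2 [Y3 Y4]]]]].
  - rewrite <- Hcons. apply big_loop_admissible.
  - rewrite <- Hcons. apply big_loop_chain.
  - simpl. unfold Rmin, Rmax. destruct Rle_dec; lra.
  - exists (z1, Jf). split; auto. rewrite <- Hcons. unfold big_loop.
    rewrite !in_app_iff. right; right; right.
    destruct m; [lia|]. simpl. apply in_app_iff. left. unfold free_seg.
    apply in_app_iff. right. left. auto.
  - exists y, d. split; auto. split; auto. split; auto. rewrite Y4, <- Hcons.
    simpl fst. rewrite big_loop_switches, big_loop_length. auto.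
Qed.

End Construction.

(** * 6. The orbit P and its code *)

Definition phi_nat (y : R) : nat :=
  if Rlt_dec a y then (if Rlt_dec (f y) a then 1%nat else 0%nat) else 0%nat.

Lemma phi_phi_nat y : phi f a y = INR (phi_nat y).
Proof. unfold phi, phi_nat. destruct Rlt_dec; [destruct Rlt_dec|]; simpl; auto. Qed.

Fixpoint jumps (z : R) (n : nat) : nat :=
  match n with O => O | S m => (jumps z m + phi_nat (iter f m z))%nat end.

Definition b2R (b : bool) : R := if b then 1 else 0.

(* Every switch to the right is followed by a switch to the left before the
   orbit returns to its starting side: switches = 2 jumps up to boundary terms. *)
Lemma switches_twice_jumps z n : 0 <= z <= 1 -> (forall t, iter f t z <> a) ->
  INR (num_sc_aux f z n) + b2R (side z) = 2 * INR (jumps z n) + b2R (side (iter f n z)).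
Proof.
  intros Hz Hav. induction n; simpl; [lra|].
  rewrite !plus_INR.
  rewrite (sign_change_side (iter f n z) (iter_unit n z Hz) (Hav n) (Hav (S n))).
  assert (step : INR (if Bool.eqb (side (iter f n z)) (side (f (iter f n z))) then 0%nat else 1%nat)
     + b2R (side (iter f n z)) = 2 * INR (phi_nat (iter f n z)) + b2R (side (f (iter f n z)))).
  { pose proof (Hav (S n)) as h. simpl in h. unfold side, phi_nat, b2R.
    destruct (Rlt_dec a (iter f n z)); destruct (Rlt_dec a (f (iter f n z)));
      destruct (Rlt_dec (f (iter f n z)) a); simpl; lra. }
  lra.
Qed.

Lemma exists_jump z n : (1 <= jumps z n)%nat ->
  exists t, a < iter f t z /\ iter f (S t) z < a.
Proof.
  induction n; simpl; intros h; [lia|].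
  destruct (Nat.eq_dec (phi_nat (iter f n z)) 1) as [E|E].
  - exists n. unfold phi_nat in E. destruct Rlt_dec; [destruct Rlt_dec|]; try discriminate. auto.
  - apply IHn. unfold phi_nat in *. repeat destruct Rlt_dec; lia.
Qed.

Lemma exists_no_switch z n : (num_sc_aux f z n < n)%nat ->
  exists t, (t < n)%nat /\ sign_change f (iter f t z) = 0%nat.
Proof.
  induction n; simpl; intros h; [lia|].
  destruct (Nat.eq_dec (sign_change f (iter f n z)) 0) as [E|E]; [exists n; split; auto|].
  pose proof (sign_change_le1 (iter f n z)).
  destruct IHn as [t [Ht Ht']]; [lia|]. exists t; split; auto.
Qed.

Lemma no_switch_same_side w : 0 <= w <= 1 -> w <> a -> f w <> a ->
  sign_change f w = 0%nat -> side (f w) = side w.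
Proof.
  intros Hw h1 h2 h3. rewrite (sign_change_side w Hw h1 h2) in h3.
  destruct (side w), (side (f w)); simpl in h3; auto; lia.
Qed.

Lemma no_switch_approaches z n : 0 <= z <= 1 -> (forall t, iter f t z <> a) ->
  num_sc_aux f z n = 0%nat -> (1 <= n)%nat -> gt_a a z (iter f n z).
Proof.
  intros Hz Hav. induction n as [|n IH]; intros H0 Hn; [lia|].
  simpl in H0. assert (Hsc : sign_change f (iter f n z) = 0%nat) by lia.
  assert (Hw := iter_unit n z Hz).
  assert (Hsd := no_switch_same_side _ Hw (Hav n) (Hav (S n)) Hsc).
  assert (Hfa' := Hav (S n)). simpl in Hfa'.
  assert (Hnear : gt_a a z (iter f n z) \/ n = 0%nat) by (destruct n; [right | left; apply IH]; auto; lia).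
  unfold side in Hsd. pose proof (Hav n).
  destruct (Rlt_dec a (iter f n z)) as [h|h]; destruct (Rlt_dec a (f (iter f n z))) as [h'|h'];
    try discriminate; simpl; unfold gt_a in *.
  - pose proof (moves_left _ Hw h). destruct Hnear; [lra | subst; simpl in *; lra].
  - pose proof (moves_right _ Hw ltac:(lra)). destruct Hnear; [lra | subst; simpl in *; lra].
Qed.

(* x >_a y means that y lies strictly between x and a. *)
Lemma gt_a_span x y : gt_a a x y -> subint (span y) (span x).
Proof. intros H. apply span_mono. unfold gt_a in H. lra. Qed.

Lemma gt_a_side x y : gt_a a x y -> side x = side y.
Proof. unfold gt_a, side. intros H. destruct (Rlt_dec a x), (Rlt_dec a y); auto; lra. Qed.

Lemma free_interval z p : 0 <= z <= 1 -> 0 <= p <= 1 ->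
  (z <= p < a /\ f z < a < f p) \/ (a < p <= z /\ f p < a < f z) ->
  exists J, subint J (span z) /\ covers (extend f) J (span (f z)) /\
    forall w, in_int J w -> w <> a.
Proof.
  intros Hz Hp Hcase. exists (hull z p). split; [|split].
  - intros w. unfold in_int, span, hull, Rmin, Rmax; simpl. repeat destruct Rle_dec; lra.
  - eapply covers_shrink; [apply hull_covers, extend_continuity; auto|].
    rewrite !extend_eq by auto.
    intros w. unfold in_int, span, hull, Rmin, Rmax; simpl. repeat destruct Rle_dec; lra.
  - intros w. unfold in_int, hull, Rmin, Rmax; simpl. repeat destruct Rle_dec; lra.
Qed.

Section Orbit.

Variables (x : R) (q : nat).
Hypothesis Hx : 0 <= x <= 1.
Hypothesis Hq : (1 <= q)%nat.
Hypothesis Hper : iter f q x = x.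
Hypothesis Havoid : forall y, in_orbit f x q y -> y <> a.

Lemma iter_mod y t : iter f q y = y -> iter f t y = iter f (t mod q) y.
Proof.
  intros Hy. rewrite (Nat.div_mod_eq t q) at 1.
  rewrite Nat.add_comm, iter_add, Nat.mul_comm, iter_mul; auto.
Qed.

Lemma in_orbit_iter t : in_orbit f x q (iter f t x).
Proof. exists (t mod q). split; [apply Nat.mod_upper_bound; lia | apply iter_mod; auto]. Qed.

Lemma orbit_iter y t : in_orbit f x q y -> in_orbit f x q (iter f t y).
Proof. intros [i [_ ->]]. rewrite <- iter_add. apply in_orbit_iter. Qed.

Lemma orbit_unit y : in_orbit f x q y -> 0 <= y <= 1.
Proof. intros [i [_ ->]]. apply iter_unit; auto. Qed.

Lemma orbit_avoids y : in_orbit f x q y -> forall t, iter f t y <> a.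
Proof. intros Hy t. apply Havoid, orbit_iter; auto. Qed.

Lemma orbit_period y : in_orbit f x q y -> iter f q y = y.
Proof. intros [i [_ ->]]. rewrite <- iter_add, Nat.add_comm, iter_add, Hper. auto. Qed.

Lemma orbit_connect y z : in_orbit f x q y -> in_orbit f x q z ->
  exists e, (e < q)%nat /\ iter f e y = z.
Proof.
  intros [i [Hi ->]] [j [Hj ->]]. exists ((q - i + j) mod q).
  split; [apply Nat.mod_upper_bound; lia|].
  rewrite <- iter_mod by (apply orbit_period, in_orbit_iter). rewrite <- iter_add.
  replace (q - i + j + i)%nat with (j + 1 * q)%nat by lia. rewrite iter_add, iter_mul; auto.
Qed.

Lemma orbit_argmax (Q : R -> Prop) (g : R -> R) : (exists y, in_orbit f x q y /\ Q y) ->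
  exists y, in_orbit f x q y /\ Q y /\ forall z, in_orbit f x q z -> Q z -> g z <= g y.
Proof.
  intros [y0 [[i0 [Hi0 ->]] HQ0]].
  destruct (finite_argmax (fun i => Q (iter f i x)) (fun i => g (iter f i x)) q)
    as [i [Hi [HQ Hmax]]]; [exists i0; auto|].
  exists (iter f i x). split; [exists i; auto|]. split; auto.
  intros z [k [Hk ->]] HQz. apply Hmax; auto.
Qed.

Lemma closest_points : (exists y, in_orbit f x q y /\ y < a) -> (exists y, in_orbit f x q y /\ a < y) ->
  exists l r, in_orbit f x q l /\ in_orbit f x q r /\ l < a /\ a < r /\
    (forall y, in_orbit f x q y -> y < a -> y <= l) /\
    (forall y, in_orbit f x q y -> a < y -> r <= y).
Proof.
  intros Hleft Hright.
  destruct (orbit_argmax (fun y => y < a) (fun y => y) Hleft) as [l [Hl [Hla Hlmax]]].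
  destruct (orbit_argmax (fun y => a < y) (fun y => - y) Hright) as [r [Hr [Hra Hrmin]]].
  exists l, r. repeat split; auto.
  intros y Hy Hya. specialize (Hrmin y Hy Hya). lra.
Qed.

Lemma orbit_step y : in_orbit f x q y -> in_orbit f x q (f y).
Proof. intros Hy. apply (orbit_iter y 1%nat Hy). Qed.

Lemma closest_cross l r : in_orbit f x q l -> in_orbit f x q r -> l < a -> a < r ->
  (forall y, in_orbit f x q y -> y < a -> y <= l) ->
  (forall y, in_orbit f x q y -> a < y -> r <= y) ->
  a < f l /\ r <= f l /\ f r < a /\ f r <= l.
Proof.
  intros Hl Hr Hla Har Hlmax Hrmin.
  assert (Hfl := orbit_step l Hl). assert (Hfr := orbit_step r Hr).
  assert (f l > l) by (apply moves_right; auto; apply (orbit_unit l Hl)).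
  assert (f r < r) by (apply moves_left; auto; apply (orbit_unit r Hr)).
  assert (Hfla : f l <> a) by (apply (orbit_avoids l Hl 1%nat)).
  assert (Hfra : f r <> a) by (apply (orbit_avoids r Hr 1%nat)).
  assert (a < f l) by (destruct (Rlt_dec a (f l)); auto; assert (f l <= l) by (apply Hlmax; auto; lra); lra).
  assert (f r < a) by (destruct (Rlt_dec (f r) a); auto; assert (r <= f r) by (apply Hrmin; auto; lra); lra).
  repeat split; auto.
Qed.

Lemma closest_pingpong l r : l < a -> a < r -> 0 <= l <= 1 -> 0 <= r <= 1 ->
  r <= f l -> f r <= l ->
  covers (extend f) (span l) (span r) /\ covers (extend f) (span r) (span l).
Proof.
  intros Hla Har Hl Hr Hfl Hfr. split.
  - eapply covers_shrink; [apply (span_covers_image l Hl) | apply span_mono; lra].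
  - eapply covers_shrink; [apply (span_covers_image r Hr) | apply span_mono; lra].
Qed.

(* A point z of P without sign change carries a free interval: [z,l] if z is
   left of a (then z <= l and f l > a), [r,z] if z is right of a. *)
Lemma orbit_free_interval l r z : in_orbit f x q l -> in_orbit f x q r -> l < a -> a < r ->
  (forall y, in_orbit f x q y -> y < a -> y <= l) ->
  (forall y, in_orbit f x q y -> a < y -> r <= y) ->
  a < f l -> f r < a -> in_orbit f x q z -> sign_change f z = 0%nat ->
  exists J, subint J (span z) /\ covers (extend f) J (span (f z)) /\ forall w, in_int J w -> w <> a.
Proof.
  intros Hl Hr Hla Har Hlmax Hrmin Hfl Hfr Hz Hsc.
  assert (Hz01 := orbit_unit z Hz). assert (Hza := orbit_avoids z Hz 0%nat).
  assert (Hfza := orbit_avoids z Hz 1%nat). simpl in Hza, Hfza.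
  assert (Hside := no_switch_same_side z Hz01 Hza Hfza Hsc). unfold side in Hside.
  destruct (Rlt_dec a z); destruct (Rlt_dec a (f z)); try discriminate.
  - assert (r <= z) by (apply Hrmin; auto).
    apply (free_interval z r Hz01 (orbit_unit r Hr)). right. lra.
  - assert (z <= l) by (apply Hlmax; auto; lra).
    apply (free_interval z l Hz01 (orbit_unit l Hl)). left. lra.
Qed.

Lemma code_along_orbit (rho : R) (L : R -> R) :
  (forall y, in_orbit f x q y -> L (f y) = L y + rho - phi f a y) ->
  forall y t, in_orbit f x q y -> L (iter f t y) = L y + INR t * rho - INR (jumps y t).
Proof.
  intros Hcode y t Hy. induction t; [simpl; lra|].
  rewrite S_INR. cbn [iter jumps].
  rewrite Hcode by (apply orbit_iter; auto). rewrite IHt, phi_phi_nat, plus_INR. lra.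
Qed.

Lemma inversion_segment (rho : R) (L : R -> R) u v :
  (forall y, in_orbit f x q y -> L (f y) = L y + rho - phi f a y) ->
  in_orbit f x q u -> in_orbit f x q v -> gt_a a u v -> L u > L v ->
  exists n, (1 <= n)%nat /\ (n < q)%nat /\ iter f n v = u /\
    INR (jumps v n) < INR n * rho /\ num_sc_aux f v n = (2 * jumps v n)%nat /\
    (1 <= jumps v n)%nat.
Proof.
  intros Hcode Hu Hv Hgt HL.
  destruct (orbit_connect v u Hv Hu) as [n [Hnq Hvu]].
  assert (Hn : (1 <= n)%nat).
  { destruct n; [|lia]. simpl in Hvu. subst. unfold gt_a in Hgt. lra. }
  assert (Hcount : L u = L v + INR n * rho - INR (jumps v n))
    by (rewrite <- Hvu; apply code_along_orbit; auto).
  assert (Hsc : num_sc_aux f v n = (2 * jumps v n)%nat).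
  { pose proof (switches_twice_jumps v n (orbit_unit v Hv) (orbit_avoids v Hv)) as B.
    rewrite Hvu, (gt_a_side u v Hgt) in B.
    apply INR_eq. rewrite mult_INR. simpl (INR 2). lra. }
  exists n. repeat split; auto; [lra|].
  destruct (Nat.eq_dec (jumps v n) 0) as [E|E]; [|lia]. exfalso.
  assert (Happ := no_switch_approaches v n (orbit_unit v Hv) (orbit_avoids v Hv) ltac:(lia) Hn).
  rewrite Hvu in Happ. unfold gt_a in Hgt, Happ. lra.
Qed.

Lemma segment_loops v n : in_orbit f x q v -> (1 <= n)%nat -> gt_a a (iter f n v) v ->
  (num_sc_aux f v n < n)%nat -> (exists t0, a < iter f t0 v /\ iter f (S t0) v < a) ->
  forall s, INR (num_sc_aux f v n) / (2 * INR n) <= s <= 1 / 2 -> in_orint f s.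
Proof.
  intros Hv Hn Hgt Hslow [t0 [Ht0 Ht0']] s Hs eps Heps.
  assert (Vorb : forall t, in_orbit f x q (iter f t v)) by (intros; apply orbit_iter; auto).
  assert (V01 : forall t, 0 <= iter f t v <= 1) by (intros; apply orbit_unit; auto).
  assert (Vav := orbit_avoids v Hv).
  destruct (closest_points) as [l [r [Hl [Hr [Hla [Har [Hlmax Hrmin]]]]]]];
    [exists (iter f (S t0) v); auto | exists (iter f t0 v); auto |].
  destruct (closest_cross l r Hl Hr Hla Har Hlmax Hrmin) as [Hfl [Hrfl [Hfr Hfrl]]].
  assert (Hl01 := orbit_unit l Hl). assert (Hr01 := orbit_unit r Hr).
  destruct (closest_pingpong l r Hla Har Hl01 Hr01 Hrfl Hfrl) as [Clr Crl].
  destruct (exists_no_switch v n Hslow) as [t1 [Ht1 Hsc1]].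
  destruct (orbit_free_interval l r (iter f t1 v) Hl Hr Hla Har Hlmax Hrmin Hfl Hfr (Vorb t1) Hsc1)
    as [Jf [HJs [HJc HJa]]].
  destruct (orbit_connect r v Hr Hv) as [e [_ He]].
  set (C := (num_sc_aux f v (S t0) + 1 + num_sc_aux f r e)%nat).
  set (N := (S t0 + 1 + e)%nat).
  destruct (loop_ratio_dense (num_sc_aux f v n) n C N Hn ltac:(lia)) with (r := s) (eps := eps)
    as [m [j [Hm Hclose]]]; auto.
  { unfold C, N. pose proof (num_sc_le v (S t0)). pose proof (num_sc_le r e). lia. }
  assert (Hto_l : iter f (S t0) v <= l) by (apply Hlmax; auto).
  assert (Hto_l_side : side (iter f (S t0) v) = side l) by (unfold side; do 2 destruct Rlt_dec; auto; lra).
  destruct (big_loop_orbit v r l (iter f t1 v) n t1 t0 e Jf (V01 0%nat) Vav Hr01 (orbit_avoids r Hr)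
    Hl01 Hla Har (gt_a_span _ _ Hgt) (gt_a_side _ _ Hgt) Ht1 eq_refl HJs HJc HJa Clr Crl
    (span_mono (iter f (S t0) v) l ltac:(lra)) Hto_l_side He m j Hm) as [y [d [Y1 [Y2 [Y3 Y4]]]]].
  exists y, d. split; [auto|]. split; [auto|]. split; [auto|].
  replace (orn f y d) with (loop_ratio (num_sc_aux f v n) n C N m j); auto.
  rewrite Y4. unfold loop_ratio, C, N. rewrite !plus_INR, !mult_INR. simpl (INR 1); simpl (INR 2).
  f_equal; ring.
Qed.

End Orbit.

End UniqueFixedPoint.

Theorem lemma2p1 (f : R -> R) (a : R) (x : R) (p q : nat) (L : R -> R) :
  maps_unit f -> continuous_on_unit f ->
  0 <= a <= 1 -> f a = a -> (forall z, 0 <= z <= 1 -> f z = z -> z = a) ->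
  0 <= x <= 1 -> periodic_pt f x q -> (2 <= q)%nat ->
  (2 * p)%nat = num_sc f x q ->
  is_code f a x q (INR p / INR q) L ->
  (exists u v, in_orbit f x q u /\ in_orbit f x q v /\ gt_a a u v /\ L u > L v) ->
  exists l k : nat, (1 <= k)%nat /\ (k < q)%nat /\ INR l / INR k < INR p / INR q /\
    (forall r, INR l / INR k <= r <= 1 / 2 -> in_orint f r).
Proof.
  intros Hm Hc Ha Hfa Hu Hx [Hq1 [Hper Hmin]] Hq H2p [_ Hcode] [u [v [Hu_orb [Hv_orb [Hgt HL]]]]].
  (* P does not contain a: x is not fixed, so no point of P is. *)
  assert (Hxa : x <> a) by (intro E; apply (Hmin 1%nat); [lia | simpl; rewrite E; auto]).
  assert (Havoid : forall y, in_orbit f x q y -> y <> a).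
  { intros y [i [_ ->]]. apply (periodic_avoids_fixed f a Ha Hfa Hu x q Hxa Hq1 Hper). }
  destruct (inversion_segment f a Hm Hc Ha Hu x q Hx Hq1 Hper Havoid _ L u v Hcode Hu_orb Hv_orb Hgt HL)
    as [n [Hn [Hnq [Hvu [Hlc [Hsc Hlc1]]]]]].
  set (lc := jumps f a v n) in *.
  assert (Hq0 : INR q > 0) by (apply lt_0_INR; lia).
  assert (Hn0 : INR n > 0) by (apply lt_0_INR; lia).
  assert (Hrho : INR p / INR q <= 1 / 2).
  { assert (H2pq : INR (2 * p) <= INR q) by (apply le_INR; rewrite H2p; apply num_sc_le).
    rewrite mult_INR in H2pq. simpl in H2pq. apply div_le_cross; lra. }
  assert (Hslow : (num_sc_aux f v n < n)%nat).
  { rewrite Hsc. apply INR_lt. rewrite mult_INR. simpl (INR 2). nra. }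
  exists lc, n. repeat split; auto.
  - apply (Rmult_lt_reg_r (INR n)); auto. unfold Rdiv at 1. rewrite Rmult_assoc, Rinv_l by lra. lra.
  - intros r Hr. apply (segment_loops f a Hm Hc Ha Hfa Hu x q Hx Hq1 Hper Havoid v n); auto.
    + rewrite Hvu. exact Hgt.
    + apply exists_jump with n; auto.
    + rewrite Hsc, mult_INR.
      replace (INR 2 * INR lc / (2 * INR n)) with (INR lc / INR n) by (simpl; field; lra). exact Hr.
Qed.
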